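(* Let $\mathcal{C}$ be the smallest set of functions of finite arity on $[0,1]$ (i.e. functions $[0,1]^n\to[0,1]$, $n\in\mathbb{N}$) such that: (i) $\mathcal{C}$ contains all projections $p^n_i(x_0,\dots,x_{n-1})=x_i$ ($n\in\mathbb{N}$, $0\le i<n$); (ii) if $g\in\mathcal{C}$ is $n$-ary and $a\in[0,1]$, then $\chi_a(g)\colon \mathbf{x}\mapsto\chi_a(g(\mathbf{x}))$ belongs to $\mathcal{C}$; (iii) if $g_1,g_2\in\mathcal{C}$ are $n$-ary and $b\in[0,1[$, then $\mathbf{x}\mapsto \mathsf{Med}_b(g_1(\mathbf{x}),g_2(\mathbf{x}))$ belongs to $\mathcal{C}$; (iv) if $I$ is a nonempty set with $|I|\le\mathfrak{c}=2^{\aleph_0}$ and $g_i\in\mathcal{C}$, $i\in I$, are all $n$-ary, then the pointwise supremum $\mathbf{x}\mapsto\bigvee_{i\in I}g_i(\mathbf{x})$ belongs to $\mathcal{C}$. Then $\mathcal{C}=\mathsf{Agg}$, i.e. the set of all aggregation functions on $[0,1]$ is generated by the infinitary supremum operation $\bigvee$, the functions $\chi_a$, $a\in[0,1]$, and the $b$-medians $\mathsf{Med}_b$, $b\in[0,1[$.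
   Context: For $n\in\mathbb{N}$, an $n$-ary aggregation function on $[0,1]$ is a function $f\colon[0,1]^n\to[0,1]$ which is nondecreasing (not necessarily strictly) in each coordinate and satisfies $f(0,\dots,0)=0$ and $f(1,\dots,1)=1$. $\mathsf{Agg}^n$ denotes the set of all $n$-ary aggregation functions (for $n=1$ it is not restricted to the identity), and $\mathsf{Agg}=\bigcup_{n\in\mathbb{N}}\mathsf{Agg}^n$. For $a\in[0,1]$, $\chi_a\colon[0,1]\to[0,1]$ is defined by $\chi_a(x)=1$ if $x\ge a$ and $x\neq0$, and $\chi_a(x)=0$ if $x<a$ or $x=0$ (so $\chi_0$ is the characteristic function of $]0,1]$ and, for $a>0$, $\chi_a$ is the characteristic function of $[a,1]$). For $b\in[0,1]$, the $b$-median is $\mathsf{Med}_b(x,y)=\mathsf{Med}(x,y,b)$, the median of the three numbers $x,y,b$. *)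

From HB Require Import structures.
From mathcomp Require Import all_boot all_order all_algebra.
From mathcomp Require Import all_classical all_reals.
Set Implicit Arguments. Unset Strict Implicit. Unset Printing Implicit Defensive.
Import Order.TTheory GRing.Theory Num.Theory.
Local Open Scope ring_scope.
Local Open Scope classical_set_scope.

Definition I01 (R : realType) := {x : R | (0 <= x <= 1)}.

Definition fn (R : realType) (n : nat) := ('I_n -> I01 R) -> I01 R.

Definition chi (R : realType) (a x : R) : R :=
  if (a <= x) && (x != 0) then 1 else 0.

Definition med3 (R : realType) (x y z : R) : R :=
  Num.max (Num.min x y) (Num.min (Num.max x y) z).

Definition Medb (R : realType) (b x y : R) : R := med3 x y b.

Definition proj (R : realType) (n : nat) (i : 'I_n) : fn R n := fun x => x i.

Definition closed_clone (R : realType) (S : forall n, fn R n -> Prop) : Prop :=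
  (forall n (i : 'I_n), S n (proj i)) /\
  (forall n (g : fn R n) (a : R), 0 <= a <= 1 -> S n g ->
     forall h : fn R n, (forall x, val (h x) = chi a (val (g x))) -> S n h) /\
  (forall n (g1 g2 : fn R n) (b : R), 0 <= b < 1 -> S n g1 -> S n g2 ->
     forall h : fn R n,
       (forall x, val (h x) = Medb b (val (g1 x)) (val (g2 x))) -> S n h) /\
  (* (iv) pointwise supremum of a nonempty family of cardinality <= 2^aleph_0 *)
  (forall n (I : Type) (g : I -> fn R n),
     inhabited I ->
     (exists e : I -> (nat -> bool), injective e) ->
     (forall i, S n (g i)) ->
     forall h : fn R n,
       (forall x, val (h x) = sup [set val (g i x) | i in [set: I]]) -> S n h).

Definition clone_C (R : realType) (n : nat) (f : fn R n) : Prop :=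
  forall S : forall m, fn R m -> Prop, closed_clone S -> S n f.

Definition is_agg (R : realType) (n : nat) (f : fn R n) : Prop :=
  (forall (x y : 'I_n -> I01 R) (i : 'I_n),
     (forall j, j != i -> x j = y j) -> val (x i) <= val (y i) ->
     val (f x) <= val (f y)) /\
  (forall x : 'I_n -> I01 R, (forall i, val (x i) = 0) -> val (f x) = 0) /\
  (forall x : 'I_n -> I01 R, (forall i, val (x i) = 1) -> val (f x) = 1).

From Pilot Require Import Defs.
From mathcomp Require Import all_boot all_order all_algebra.
From mathcomp Require Import all_classical all_reals.
Set Implicit Arguments. Unset Strict Implicit. Unset Printing Implicit Defensive.
Import Order.TTheory GRing.Theory Num.Theory.
Local Open Scope ring_scope.
Local Open Scope classical_set_scope.

(* Projections are aggregation functions, and chi_a, the b-medians and suprema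
   preserve monotonicity and the boundary values, so every generated function
   is an aggregation function.  Conversely, fix an aggregation function f and a
   point y.  From projections, chi_a and the 0-median (which is min) one builds
   the indicators of "x lies above y" and of "x is the top point"; a single
   f(y)-median of the two gives a generated g_y with g_y <= f, by monotonicity
   of f, and g_y(y) = f(y).  Hence f is the supremum of the g_y, a family
   indexed by [0,1]^n, which has the cardinality of the continuum since a point
   is determined by the rationals below its coordinates. *)

Section RealFacts.
Variable R : realType.
Implicit Types (a u v x y z : R) (E : set R).

Lemma med3_idem x z : med3 x x z = x.
Proof. by rewrite /med3 minxx maxxx minKx. Qed.

Lemma med3_idem_r x y : med3 x y y = y.
Proof. by rewrite /med3 maxxK minxK. Qed.

Lemma med3_min x y : 0 <= x -> 0 <= y -> med3 x y 0 = Num.min x y.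
Proof.
move=> x_ge0 y_ge0; rewrite /med3 (@min_r _ _ (Num.max x y)) ?le_max ?x_ge0 //.
by rewrite max_l // le_min x_ge0.
Qed.

Lemma med3_10 z : 0 <= z <= 1 -> med3 1 0 z = z.
Proof.
by case/andP=> z_ge0 z_le1; rewrite /med3 (min_r ler01) (max_l ler01) (min_r z_le1) max_r.
Qed.

Lemma med3_mono x y x' y' z : x <= x' -> y <= y' -> med3 x y z <= med3 x' y' z.
Proof.
move=> xx' yy'; rewrite /med3; apply: le_max2; first exact: le_min2.
by apply: le_min2 => //; exact: le_max2.
Qed.

Lemma med3_01 x y z : 0 <= x <= 1 -> 0 <= y <= 1 -> 0 <= med3 x y z <= 1.
Proof.
move=> /andP[x_ge0 x_le1] /andP[y_ge0 y_le1].
by rewrite -{1}(med3_idem 0 z) -(med3_idem 1 z) !med3_mono.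
Qed.

Lemma chiE a v : chi a v = ((a <= v) && (v != 0))%:R.
Proof. by rewrite /chi; case: ifP. Qed.

Lemma chi_01 a v : 0 <= chi a v <= 1.
Proof. by rewrite chiE ler0n lern1 leq_b1. Qed.

Lemma chi_0 a : chi a 0 = 0.
Proof. by rewrite chiE eqxx andbF. Qed.

Lemma chi_1 a : a <= 1 -> chi a 1 = 1.
Proof. by move=> a_le1; rewrite chiE a_le1 oner_eq0. Qed.

Lemma chi_mono a u v : 0 <= u -> u <= v -> chi a u <= chi a v.
Proof.
move=> u_ge0 uv; rewrite !chiE; case: (boolP (_ && _)) => [/andP[au u_neq0]|_].
  by rewrite (le_trans au uv) gt_eqF // (lt_le_trans _ uv) // lt_neqAle eq_sym u_neq0.
by rewrite ler0n.
Qed.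

Lemma natr_andb_min (p q : bool) : (p && q)%:R = Num.min (p%:R : R) q%:R.
Proof. by case: p; case: q; rewrite /= ?minxx ?(min_l ler01) ?(min_r ler01). Qed.

Lemma sup_eq_max E x : E x -> ubound E x -> sup E = x.
Proof.
move=> Ex ubx; apply/le_anti; rewrite ge_sup //=; last by exists x.
by rewrite ub_le_sup //; exists x.
Qed.

End RealFacts.

Lemma I01_ge0 (R : realType) (x : I01 R) : 0 <= val x.
Proof. by case/andP: (valP x). Qed.

Lemma I01_le1 (R : realType) (x : I01 R) : val x <= 1.
Proof. by case/andP: (valP x). Qed.

Lemma I01_zero_subproof (R : realType) : 0 <= (0 : R) <= 1.
Proof. by rewrite lexx ler01. Qed.

Definition I01_zero (R : realType) : I01 R := exist _ 0 (I01_zero_subproof R).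

Definition cut_code (R : realType) (T : countType) (v : T -> R) (m : nat) : bool :=
  if @unpickle (rat * T)%type m is Some (q, t) then ratr q < v t else false.

Lemma cut_code_inj (R : realType) (T : countType) : injective (@cut_code R T).
Proof.
have cut_code_sep (v w : T -> R) t : v t < w t -> cut_code v != cut_code w.
  case/rat_in_itvoo=> q; rewrite in_itv /= => /andP[vq qw]; apply/eqP.
  move/(congr1 (fun c => c (pickle (q, t)))); rewrite /cut_code pickleK qw.
  by rewrite ltNge (ltW vq).
move=> v w vw; apply/funext => t.
by case: (ltgtP (v t) (w t)) => // /cut_code_sep; rewrite vw eqxx.
Qed.

Lemma I01_funs_inj_bits (R : realType) (T : countType) :
  exists e : (T -> I01 R) -> nat -> bool, injective e.
Proof.
exists (fun x => cut_code (fun t => val (x t))) => x y /cut_code_inj xy.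
by apply/funext => t; apply: val_inj; exact: (congr1 (fun v => v t) xy).
Qed.

Section Aggregation.
Variables (R : realType) (n : nat).
Implicit Types (f g h : fn R n) (x y : 'I_n -> I01 R).

Lemma agg_monotone f : is_agg f ->
  forall x y, (forall i, val (x i) <= val (y i)) -> val (f x) <= val (f y).
Proof.
case=> f_mono _ x y xy.
pose z m (i : 'I_n) := if (i < m)%N then y i else x i.
have z_step m : val (f (z m)) <= val (f (z m.+1)).
  have [m_lt|n_le] := ltnP m n.
    apply: (f_mono _ _ (Ordinal m_lt)) => [j ne_jm|]; last by rewrite /z /= ltnn ltnSn xy.
    have ne_jm_nat : (j : nat) != m := ne_jm.
    by rewrite /z ltnS [(j <= m)%N]leq_eqVlt (negbTE ne_jm_nat).
  suff -> : z m.+1 = z m by [].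
  by apply/funext => i; rewrite /z !(leq_trans (ltn_ord i)) ?leqW.
have z_chain m : val (f (z 0%N)) <= val (f (z m)).
  by elim: m => [|m IH]; [exact: lexx | exact: le_trans IH (z_step m)].
have z0 : z 0%N = x by apply/funext.
have zn : z n = y by apply/funext => i; rewrite /z ltn_ord.
by have := z_chain n; rewrite z0 zn.
Qed.

Lemma is_agg_proj (i : 'I_n) : is_agg (@Defs.proj R n i).
Proof.
split=> [x y j xy le_j|]; last by split=> x; apply.
by rewrite /Defs.proj; case: (eqVneq i j) => [-> // | ne_ij]; rewrite xy.
Qed.

Lemma is_agg_chi a g h : a <= 1 -> is_agg g ->
  (forall x, val (h x) = chi a (val (g x))) -> is_agg h.
Proof.
move=> a_le1 [g_mono [g0 g1]] hE; split; [|split] => [x y i xy le_i|x x0|x x1].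
- by rewrite !hE; apply: chi_mono (I01_ge0 _) (g_mono _ _ _ xy le_i).
- by rewrite hE g0 // chi_0.
- by rewrite hE g1 // chi_1.
Qed.

Lemma is_agg_Medb b g1 g2 h : is_agg g1 -> is_agg g2 ->
  (forall x, val (h x) = Medb b (val (g1 x)) (val (g2 x))) -> is_agg h.
Proof.
move=> [g1_mono [g1_0 g1_1]] [g2_mono [g2_0 g2_1]] hE.
split; [|split] => [x y i xy le_i|x x0|x x1]; rewrite !hE /Medb.
- by apply: med3_mono; [exact: g1_mono xy le_i | exact: g2_mono xy le_i].
- by rewrite g1_0 // g2_0 // med3_idem.
- by rewrite g1_1 // g2_1 // med3_idem.
Qed.

Lemma is_agg_sup (I : Type) (g : I -> fn R n) h : inhabited I ->
  (forall i, is_agg (g i)) ->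
  (forall x, val (h x) = sup [set val (g i x) | i in [set: I]]) -> is_agg h.
Proof.
move=> [i0] gA hE; split; [|split] => [x y j xy le_j|x x0|x x1]; rewrite !hE.
- rewrite ge_sup //; first by exists (val (g i0 x)), i0.
  move=> _ [i _ <-]; apply: le_trans ((gA i).1 _ _ _ xy le_j) _.
  apply: ub_le_sup; last by exists i.
  by exists 1 => _ [i' _ <-]; exact: I01_le1.
- apply: sup_eq_max => [|_ [i _ <-]]; last by rewrite (gA i).2.1.
  by exists i0 => //; exact: (gA i0).2.1.
- apply: sup_eq_max => [|_ [i _ <-]]; last by rewrite (gA i).2.2.
  by exists i0 => //; exact: (gA i0).2.2.
Qed.

End Aggregation.

Lemma closed_clone_agg (R : realType) : closed_clone (fun m (g : fn R m) => is_agg g).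
Proof.
split; [exact: is_agg_proj | split; [|split]] => /=.
- by move=> m g a /andP[_ a_le1] gA h; exact: is_agg_chi.
- by move=> m g1 g2 b _ g1A g2A h; exact: is_agg_Medb.
- by move=> m I g I0 _ gA h; exact: is_agg_sup.
Qed.

Lemma nullary_not_agg (R : realType) (f : fn R 0) : ~ is_agg f.
Proof.
case=> _ [f0 f1]; pose x (i : 'I_0) := I01_zero R.
have no_index (P : 'I_0 -> Prop) (i : 'I_0) : P i by have := ltn_ord i; rewrite ltn0.
by have := f1 x (no_index _); rewrite (f0 x (no_index _)) => /esym/eqP; rewrite oner_eq0.
Qed.

Definition chi_all (R : realType) m (a v : 'I_m -> R) : R :=
  \big[Num.min/1]_(i < m) chi (a i) (v i).

Lemma chi_allE (R : realType) m (a v : 'I_m -> R) :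
  chi_all a v = [forall i, (a i <= v i) && (v i != 0)]%:R.
Proof.
rewrite /chi_all (eq_bigr (fun i => ((a i <= v i) && (v i != 0))%:R)) => [|i _].
  by rewrite -(big_morph _ (@natr_andb_min R) (id2 := true) (erefl (1 : R))) big_andE.
exact: chiE.
Qed.

Lemma chi_all_01 (R : realType) m (a v : 'I_m -> R) : 0 <= chi_all a v <= 1.
Proof. by rewrite chi_allE ler0n lern1 leq_b1. Qed.

Section Generated.
Variables (R : realType) (S : forall m, fn R m -> Prop).
Hypothesis S_closed : closed_clone S.

Definition representable n (G : ('I_n -> I01 R) -> R) :=
  exists g : fn R n, S g /\ forall x, val (g x) = G x.

Variable n : nat.
Implicit Types G : ('I_n -> I01 R) -> R.

Lemma representable_01 G x : representable G -> 0 <= G x <= 1.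
Proof. by case=> g [_ gG]; rewrite -gG; exact: (valP (g x)). Qed.

Lemma representable_eq G G' : representable G -> G =1 G' -> representable G'.
Proof. by case=> g [Sg gG] GG'; exists g; split=> // x; rewrite gG. Qed.

Lemma representable_proj (i : 'I_n) : representable (fun x => val (x i)).
Proof. by exists (@Defs.proj R n i); split=> //; case: S_closed. Qed.

Lemma representable_chi a G : 0 <= a <= 1 -> representable G ->
  representable (fun x => chi a (G x)).
Proof.
move=> a01 [g [Sg gG]]; exists (fun x => exist _ (chi a (G x)) (chi_01 a (G x))).
split=> //; have [_ [S_chi _]] := S_closed.
by apply: (S_chi _ g a a01 Sg) => x /=; rewrite gG.
Qed.

Lemma representable_Medb b G1 G2 : 0 <= b < 1 ->
  representable G1 -> representable G2 -> representable (fun x => Medb b (G1 x) (G2 x)).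
Proof.
move=> b01 [g1 [Sg1 g1G]] [g2 [Sg2 g2G]].
exists (fun x => exist _ (Medb b (val (g1 x)) (val (g2 x)))
                         (med3_01 _ (valP (g1 x)) (valP (g2 x)))).
split=> [|x]; last by rewrite /= g1G g2G.
by have [_ [_ [S_med _]]] := S_closed; exact: S_med b01 Sg1 Sg2 _ _.
Qed.

Lemma representable_min G1 G2 : representable G1 -> representable G2 ->
  representable (fun x => Num.min (G1 x) (G2 x)).
Proof.
move=> rG1 rG2; have b01 : 0 <= (0 : R) < 1 by rewrite lexx ltr01.
apply: representable_eq (representable_Medb b01 rG1 rG2) _ => x.
have /andP[G1_ge0 _] := representable_01 x rG1.
have /andP[G2_ge0 _] := representable_01 x rG2.
by rewrite /Medb med3_min.
Qed.

Lemma representable_bigmin m (F : 'I_m.+1 -> ('I_n -> I01 R) -> R) :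
  (forall i, representable (F i)) ->
  representable (fun x => \big[Num.min/1]_(i < m.+1) F i x).
Proof.
elim: m F => [|m IH] F rF.
  apply: representable_eq (rF ord0) _ => x.
  have /andP[_ F_le1] := representable_01 x (rF ord0).
  by rewrite big_ord_recl big_ord0 min_l.
have rF_tail := IH _ (fun i => rF (lift ord0 i)).
apply: representable_eq (representable_min (rF ord0) rF_tail) _ => x.
by rewrite [in RHS]big_ord_recl.
Qed.

Lemma representable_chi_all m (a : 'I_m.+1 -> R) (sigma : 'I_m.+1 -> 'I_n) :
  (forall i, 0 <= a i <= 1) ->
  representable (fun x => chi_all a (fun i => val (x (sigma i)))).
Proof.
move=> a01; apply: representable_bigmin => i.
exact: representable_chi (a01 i) (representable_proj (sigma i)).
Qed.

End Generated.

Section Minorant.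
Variables (R : realType) (k : nat).
Local Notation point := ('I_k.+1 -> I01 R).
Implicit Types x y : point.

Definition pos_coord y : 'I_k.+1 := odflt ord0 [pick i | 0 < val (y i)].

(* A coordinate where y vanishes is redirected to a positive one, since the
   factor chi 0 (x i) would wrongly require x i <> 0. *)
Definition to_pos y (i : 'I_k.+1) : 'I_k.+1 :=
  if 0 < val (y i) then i else pos_coord y.

Definition top_ind x : R := chi_all (fun=> 1) (fun i => val (x i)).

Definition dom_ind y x : R :=
  chi_all (fun i => val (y (to_pos y i))) (fun i => val (x (to_pos y i))).

Lemma top_ind_cases x : (top_ind x = 1 /\ forall i, val (x i) = 1) \/ top_ind x = 0.
Proof.
rewrite /top_ind chi_allE; case: forallP => [x1|_]; [left | by right].
by split=> // i; have /andP[x_ge1 _] := x1 i; apply/le_anti; rewrite x_ge1 I01_le1.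
Qed.

Lemma dom_ind_cases y x :
  (dom_ind y x = 1 /\ forall i, val (y i) <= val (x i)) \/ dom_ind y x = 0.
Proof.
rewrite /dom_ind chi_allE; case: forallP => [yx|_]; [left | by right].
split=> // i; have [y_pos|y_le0] := ltP 0 (val (y i)).
  by have := yx i; rewrite /to_pos y_pos => /andP[].
exact: le_trans y_le0 (I01_ge0 _).
Qed.

Lemma dom_ind_refl x : (exists i, 0 < val (x i)) -> dom_ind x x = 1.
Proof.
move=> [i0 x_i0]; rewrite /dom_ind chi_allE; case: forallP => // no_dom.
exfalso; apply: no_dom => i; rewrite lexx gt_eqF //= /to_pos; case: ifP => // _.
by rewrite /pos_coord; case: pickP => //= /(_ i0); rewrite x_i0.
Qed.

Variable f : fn R k.+1.

(* g_y of the paper: f(y) on the points above y, 1 at the top and 0 elsewhere;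
   Med_1 is not available, hence the case f(y) = 1. *)
Definition minorant y x : R :=
  if val (f y) < 1 then Medb (val (f y)) (dom_ind y x) (top_ind x) else dom_ind y x.

Lemma minorant_01 y x : 0 <= minorant y x <= 1.
Proof. by rewrite /minorant; case: ifP => _; rewrite ?med3_01 ?chi_all_01. Qed.

Lemma representable_minorant S y : closed_clone S -> representable S (minorant y).
Proof.
move=> S_closed.
have dom_y : representable S (dom_ind y).
  by apply: representable_chi_all => // i; rewrite I01_ge0 I01_le1.
rewrite /minorant; case: (boolP (val (f y) < 1)) => [fy_lt1|_]; last exact: dom_y.
apply: representable_Medb => //; first by rewrite I01_ge0.
by apply: representable_chi_all => // i; rewrite lexx ler01.
Qed.

Hypothesis f_agg : is_agg f.

Lemma minorant_le y x : minorant y x <= val (f x).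
Proof.
have [[_ x1] | T0] := top_ind_cases x.
  by rewrite f_agg.2.2 //; have /andP[] := minorant_01 y x.
rewrite /minorant T0; have [[U1 yx] | ->] := dom_ind_cases y x.
  have fyx := agg_monotone f_agg yx; rewrite U1.
  case: ifP => [_ | /negbT]; first by rewrite /Medb med3_10 ?(valP (f y)).
  by rewrite -leNgt => /le_trans; apply.
by case: ifP => _; rewrite ?/Medb ?med3_idem I01_ge0.
Qed.

Lemma minorant_diag x : minorant x x = val (f x).
Proof.
have [/existsP x_pos | /existsPn x_npos] := boolP [exists i, 0 < val (x i)].
  rewrite /minorant dom_ind_refl //; case: ifP => [fx_lt1 | /negbT].
    have [[_ x1] | ->] := top_ind_cases x.
      by move: fx_lt1; rewrite f_agg.2.2 // ltxx.
    by rewrite /Medb med3_10 ?(valP (f x)).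
  by rewrite -leNgt => fx_ge1; apply/le_anti; rewrite fx_ge1 I01_le1.
have x0 i : val (x i) = 0 by apply/le_anti; rewrite I01_ge0 andbT leNgt x_npos.
have [[_ x1] | T0] := top_ind_cases x.
  by have := x1 ord0; rewrite x0 => /eqP; rewrite eq_sym oner_eq0.
by rewrite /minorant f_agg.2.1 // ltr01 T0 /Medb med3_idem_r.
Qed.

End Minorant.

Theorem theorem1 (R : realType) (n : nat) (f : fn R n) :
  clone_C f <-> is_agg f.
Proof.
split=> [f_clone | f_agg S S_closed]; first exact: f_clone _ (closed_clone_agg R).
case: n f f_agg => [f /nullary_not_agg [] | k f f_agg].
have [g gP] := choice (fun y => representable_minorant f y S_closed).
have [_ [_ [_ S_sup]]] := S_closed.
apply: (S_sup _ _ g) => [||y|x].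
- by constructor; exact: (fun=> I01_zero R).
- exact: I01_funs_inj_bits.
- by have [] := gP y.
- apply/esym/sup_eq_max => [|_ [y _ <-]].
    by exists x => //; rewrite (gP x).2 minorant_diag.
  by rewrite (gP y).2; exact: minorant_le.
Qed.
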